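(* Let $g$ be a smooth metric of revolution on $S^2$, i.e. on the complement of two points (the poles) there are coordinates $(r,\phi)\in(0,R)\times\mathbb{R}/2\pi\mathbb{Z}$ with $g=\mathrm{d}r^2+a(r)^2\mathrm{d}\phi^2$ for a function $a:[0,R]\to[0,\infty)$ (positive on $(0,R)$, with $r=0$ and $r=R$ corresponding to the two poles), and assume that the Gaussian curvature $K$ of $g$ is non-constant. Let $\mu$ be the area form of $g$. Then $K$ does not induce a Hamiltonian circle action on $(S^2,\mu)$, i.e. there is no $T>0$ such that the time-$T$ map of the Hamiltonian flow of $K$ on $(S^2,\mu)$ is the identity.
   Context: The Hamiltonian flow of $K$ on $(S^2,\mu)$ is the flow of the vector field $X_K$ defined by $\mu(X_K,\cdot)=-\mathrm{d}K$. *)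

From Stdlib Require Import Reals Lra.
From Coquelicot Require Import Coquelicot.
Open Scope R_scope.

(* In polar coordinates (r, phi) in (0,Rm) x R/2piZ on S^2 minus the   *)
(* two poles, g = dr^2 + a(r)^2 dphi^2.  The metric extends smoothly   *)
(* over the poles r = 0 and r = Rm iff a : [0,Rm] -> [0,oo) is the     *)
(* restriction of a smooth function that is odd about 0 and odd about  *)
(* Rm (equivalently: all even derivatives of a vanish at 0 and Rm),    *)
(* with a'(0) = 1, a'(Rm) = -1, and a > 0 on (0,Rm).  We encode a by   *)
(* its (unique) smooth extension to all of R obtained by the odd       *)
(* reflections.                                                        *)

Definition smooth (f : R -> R) : Prop :=
  forall (n : nat) (x : R), ex_derive (Derive_n f n) x.

Definition metric_of_revolution (Rm : R) (a : R -> R) : Prop :=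
  0 < Rm /\
  smooth a /\
  (forall r, a (- r) = - a r) /\
  (forall s, a (Rm + s) = - a (Rm - s)) /\
  (forall r, 0 < r < Rm -> 0 < a r) /\
  Derive a 0 = 1 /\
  Derive a Rm = -1.

(* Points of the open cylinder S^2 \ {poles}, in coordinates (r, phi);
   phi is taken in R and read modulo 2*PI. *)
Definition in_cyl (Rm : R) (p : R * R) : Prop := 0 < fst p < Rm.

Definition gauss_curv (a : R -> R) (p : R * R) : R :=
  - Derive_n a 2 (fst p) / a (fst p).

Definition d_r (H : R * R -> R) (p : R * R) : R :=
  Derive (fun r => H (r, snd p)) (fst p).
Definition d_phi (H : R * R -> R) (p : R * R) : R :=
  Derive (fun ph => H (fst p, ph)) (snd p).
Definition dfun (H : R * R -> R) (p : R * R) (v : R * R) : R :=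
  d_r H p * fst v + d_phi H p * snd v.

Definition area_form (a : R -> R) (p : R * R) (u v : R * R) : R :=
  a (fst p) * (fst u * snd v - snd u * fst v).

Definition is_ham_field (Rm : R) (a : R -> R) (H : R * R -> R)
  (X : R * R -> R * R) : Prop :=
  forall p v, in_cyl Rm p -> area_form a p (X p) v = - dfun H p v.

Definition is_flow (Rm : R) (X : R * R -> R * R)
  (Phi : R -> R * R -> R * R) : Prop :=
  forall p, in_cyl Rm p ->
    Phi 0 p = p /\
    forall t, in_cyl Rm (Phi t p) /\
      is_derive (fun s => fst (Phi s p)) t (fst (X (Phi t p))) /\
      is_derive (fun s => snd (Phi s p)) t (snd (X (Phi t p))).

Definition time_map_is_id (Rm : R) (Phi : R -> R * R -> R * R) (T : R) : Prop :=
  forall p, in_cyl Rm p ->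
    fst (Phi T p) = fst p /\
    exists k : Z, snd (Phi T p) = snd p + 2 * PI * IZR k.

(* Along a parallel r = const the Hamiltonian field of K = K(r) is the rotation with
   angular speed w(r) = K'(r) / a(r).  If the time-T map is the identity, T w(r) lies
   in 2 pi Z for every r, so by continuity w is a constant c.  The quantity
   E = a'^2 - a a'' satisfies E' = a^3 w = c a^3 and E = 1 at both poles, hence
   c = 0; but then K' = a w = 0 and K is constant. *)

From Stdlib Require Import Reals Lra Lia.
From Coquelicot Require Import Coquelicot.
Open Scope R_scope.

(* [gauss_curv a] is convertible to [fun p => curv a (fst p)]. *)
Definition curv (a : R -> R) (r : R) : R := - Derive_n a 2 r / a r.

(* a^2 K', written without division so that it is differentiable up to the poles. *)
Definition curv_flux (a : R -> R) (r : R) : R :=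
  Derive a r * Derive_n a 2 r - Derive_n a 3 r * a r.

Definition angular_speed (a : R -> R) (r : R) : R := curv_flux a r / a r ^ 3.

Definition radial_energy (a : R -> R) (r : R) : R :=
  Derive a r ^ 2 - a r * Derive_n a 2 r.

Lemma is_derive_curv (a : R -> R) (r : R) :
  smooth a -> a r <> 0 -> is_derive (curv a) r (a r * angular_speed a r).
Proof.
  intros Hs Ha. unfold curv, angular_speed, curv_flux.
  auto_derive.
  - repeat split; try exact Ha;
      first [exact (Hs 0%nat r) | exact (Hs 1%nat r) | exact (Hs 2%nat r)].
  - change (Derive (fun x => Derive (fun y => Derive (fun z => a z) y) x) r)
      with (Derive_n a 3 r).
    change (Derive (fun y => Derive (fun z => a z) y) r) with (Derive_n a 2 r).
    change (Derive (fun z => a z) r) with (Derive a r).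
    field. exact Ha.
Qed.

Lemma continuity_pt_angular_speed (a : R -> R) (r : R) :
  smooth a -> a r <> 0 -> continuity_pt (angular_speed a) r.
Proof.
  intros Hs Ha.
  apply continuity_pt_filterlim, (ex_derive_continuous (V := R_NormedModule)).
  unfold angular_speed, curv_flux. auto_derive.
  repeat split;
    first [exact (Hs 0%nat r) | exact (Hs 1%nat r) | exact (Hs 2%nat r)
          | exact (Hs 3%nat r) | exact (pow_nonzero _ 3 Ha)].
Qed.

Lemma is_derive_radial_energy (a : R -> R) (r : R) :
  smooth a -> is_derive (radial_energy a) r (curv_flux a r).
Proof.
  intros Hs. unfold radial_energy, curv_flux.
  auto_derive.
  - repeat split; first [exact (Hs 0%nat r) | exact (Hs 1%nat r) | exact (Hs 2%nat r)].
  - change (Derive (fun x => Derive (fun y => Derive (fun z => a z) y) x) r)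
      with (Derive_n a 3 r).
    change (Derive (fun y => Derive (fun z => a z) y) r) with (Derive_n a 2 r).
    change (Derive (fun z => a z) r) with (Derive a r).
    change (Derive (fun x => Derive a x) r) with (Derive_n a 2 r).
    ring.
Qed.

Lemma is_derive_const_increment (f : R -> R) (C x y : R) :
  (forall t, Rmin x y <= t <= Rmax x y -> is_derive f t C) ->
  f y - f x = C * (y - x).
Proof.
  intros Hd.
  assert (incr : forall u v, u < v -> (forall t, u <= t <= v -> is_derive f t C) ->
            f v - f u = C * (v - u)).
  { intros u v Huv Hd'.
    destruct (MVT_cor2 f (fun _ => C) u v Huv) as [c [Hc _]]; [|exact Hc].
    intros c Hc. apply is_derive_Reals, Hd', Hc. }
  destruct (Rtotal_order x y) as [Hxy | [-> | Hxy]].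
  - apply incr; [exact Hxy|]. intros t Ht. apply Hd.
    rewrite Rmin_left, Rmax_right; lra.
  - ring.
  - assert (H : f x - f y = C * (x - y)).
    { apply incr; [exact Hxy|]. intros t Ht. apply Hd.
      rewrite Rmin_right, Rmax_left; lra. }
    lra.
Qed.

Lemma integer_valued_continuous_not_lt (f : R -> R) (x y : R) : x < y ->
  (forall z, x <= z <= y -> continuity_pt f z) ->
  (forall z, x <= z <= y -> exists k : Z, f z = IZR k) ->
  ~ f x < f y.
Proof.
  intros Hxy Hc Hint Hlt.
  destruct (Hint x) as [kx Hkx]; [lra|].
  destruct (Hint y) as [ky Hky]; [lra|].
  assert (Hk : (kx + 1 <= ky)%Z) by (apply Z.le_succ_l, lt_IZR; lra).
  apply IZR_le in Hk. rewrite plus_IZR in Hk.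
  (* the half-integer kx + 1/2 lies between f x and f y but is not an integer *)
  set (v := IZR kx + / 2).
  destruct (Ranalysis5.IVT_interv (fun z => f z - v) x y) as [z [Hz Hfz]].
  - intros z Hz. apply continuity_pt_minus; [apply Hc, Hz|].
    apply continuity_pt_const. intros u u'. reflexivity.
  - exact Hxy.
  - unfold v. lra.
  - unfold v. lra.
  - destruct (Hint z Hz) as [k Hk'].
    unfold v in Hfz.
    assert (Hlo : (kx < k)%Z) by (apply lt_IZR; lra).
    assert (Hhi : (k < kx + 1)%Z) by (apply lt_IZR; rewrite plus_IZR; lra).
    lia.
Qed.

Lemma integer_valued_continuous_const (f : R -> R) (lo hi : R) :
  (forall x, lo < x < hi -> continuity_pt f x) ->
  (forall x, lo < x < hi -> exists k : Z, f x = IZR k) ->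
  forall x y, lo < x < hi -> lo < y < hi -> f x = f y.
Proof.
  intros Hc Hint.
  assert (ordered : forall x y, lo < x < hi -> lo < y < hi -> x < y -> f x = f y).
  { intros x y Hx Hy Hxy.
    assert (Hc' : forall z, x <= z <= y -> continuity_pt f z)
      by (intros z Hz; apply Hc; lra).
    assert (Hint' : forall z, x <= z <= y -> exists k : Z, f z = IZR k)
      by (intros z Hz; apply Hint; lra).
    assert (Hopp_c : forall z, x <= z <= y -> continuity_pt (fun u => - f u) z)
      by (intros z Hz; apply continuity_pt_opp, Hc', Hz).
    assert (Hopp_int : forall z, x <= z <= y -> exists k : Z, - f z = IZR k).
    { intros z Hz. destruct (Hint' z Hz) as [k Hk].
      exists (- k)%Z. rewrite opp_IZR, Hk. reflexivity. }
    pose proof (integer_valued_continuous_not_lt f x y Hxy Hc' Hint').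
    pose proof (integer_valued_continuous_not_lt _ x y Hxy Hopp_c Hopp_int).
    lra. }
  intros x y Hx Hy.
  destruct (Rtotal_order x y) as [Hxy | [-> | Hxy]].
  - apply ordered; assumption.
  - reflexivity.
  - symmetry. apply ordered; assumption.
Qed.

Lemma ham_field_radial (Rm : R) (a h w : R -> R) (X : R * R -> R * R) :
  (forall r, 0 < r < Rm -> a r <> 0) ->
  (forall r, 0 < r < Rm -> is_derive h r (a r * w r)) ->
  is_ham_field Rm a (fun p => h (fst p)) X ->
  forall p, in_cyl Rm p -> X p = (0, w (fst p)).
Proof.
  intros Ha Hh HX p Hp.
  assert (dr : d_r (fun q => h (fst q)) p = a (fst p) * w (fst p))
    by (apply is_derive_unique, Hh, Hp).
  assert (dphi : d_phi (fun q => h (fst q)) p = 0) by apply (Derive_const (h (fst p))).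
  pose proof (HX p (1, 0) Hp) as H10. pose proof (HX p (0, 1) Hp) as H01.
  unfold area_form, dfun in H10, H01. rewrite dr, dphi in H10, H01. simpl in H10, H01.
  pose proof (Ha _ Hp) as Hap.
  rewrite (surjective_pairing (X p)). f_equal.
  - apply (Rmult_eq_reg_l (a (fst p))); [lra | exact Hap].
  - apply (Rmult_eq_reg_l (a (fst p))); [lra | exact Hap].
Qed.

Lemma flow_of_rotation (Rm : R) (w : R -> R) (X : R * R -> R * R)
    (Phi : R -> R * R -> R * R) :
  (forall p, in_cyl Rm p -> X p = (0, w (fst p))) ->
  is_flow Rm X Phi ->
  forall p t, in_cyl Rm p -> Phi t p = (fst p, snd p + w (fst p) * t).
Proof.
  intros HX HPhi p t Hp.
  destruct (HPhi p Hp) as [H0 Hmove].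
  assert (Hr : forall s, fst (Phi s p) = fst p).
  { intros s.
    assert (E : fst (Phi s p) - fst (Phi 0 p) = 0 * (s - 0)).
    { apply (is_derive_const_increment (fun s => fst (Phi s p))).
      intros u _. destruct (Hmove u) as [Hin [Hd _]].
      rewrite HX in Hd by exact Hin. exact Hd. }
    rewrite H0 in E. lra. }
  assert (E : snd (Phi t p) - snd (Phi 0 p) = w (fst p) * (t - 0)).
  { apply (is_derive_const_increment (fun s => snd (Phi s p))).
    intros u _. destruct (Hmove u) as [Hin [_ Hd]].
    rewrite HX, Hr in Hd by exact Hin. exact Hd. }
  rewrite H0 in E.
  rewrite (surjective_pairing (Phi t p)), Hr. f_equal. lra.
Qed.

Lemma rotation_time_map_id_lattice (Rm T : R) (w : R -> R) (Phi : R -> R * R -> R * R) :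
  (forall p t, in_cyl Rm p -> Phi t p = (fst p, snd p + w (fst p) * t)) ->
  time_map_is_id Rm Phi T ->
  forall r, 0 < r < Rm -> exists k : Z, w r * T = 2 * PI * IZR k.
Proof.
  intros Hrot Hid r Hr.
  assert (Hp : in_cyl Rm (r, 0)) by exact Hr.
  destruct (Hid _ Hp) as [_ [k Hk]].
  exists k. rewrite Hrot in Hk by exact Hp. simpl in Hk. lra.
Qed.

Lemma periodic_rotation_speed_const (w : R -> R) (T lo hi : R) : 0 < T ->
  (forall x, lo < x < hi -> continuity_pt w x) ->
  (forall x, lo < x < hi -> exists k : Z, w x * T = 2 * PI * IZR k) ->
  forall x y, lo < x < hi -> lo < y < hi -> w x = w y.
Proof.
  intros HT Hc Hper x y Hx Hy.
  pose proof PI_RGT_0.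
  set (turns := fun s => w s * T / (2 * PI)).
  assert (E : turns x = turns y).
  { apply (integer_valued_continuous_const turns lo hi); try assumption.
    - intros s Hs. apply continuity_pt_div; [apply continuity_pt_mult|..].
      + apply Hc, Hs.
      + apply continuity_pt_const. intros u v. reflexivity.
      + apply continuity_pt_const. intros u v. reflexivity.
      + lra.
    - intros s Hs. destruct (Hper s Hs) as [k Hk].
      exists k. unfold turns. rewrite Hk. field. lra. }
  unfold turns in E.
  apply (Rmult_eq_reg_r (T / (2 * PI))).
  - unfold Rdiv in *. rewrite <- !Rmult_assoc. exact E.
  - apply Rgt_not_eq, Rdiv_lt_0_compat; lra.
Qed.

Lemma const_angular_speed_eq0 (Rm : R) (a : R -> R) (c : R) :
  metric_of_revolution Rm a ->
  (forall r, 0 < r < Rm -> angular_speed a r = c) -> c = 0.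
Proof.
  intros [HRm [Hs [Hodd [Hodd' [Hpos [Hd0 HdRm]]]]]] Hc.
  assert (a0 : a 0 = 0) by (pose proof (Hodd 0); rewrite Ropp_0 in *; lra).
  assert (aRm : a Rm = 0)
    by (pose proof (Hodd' 0); rewrite Rplus_0_r, Rminus_0_r in *; lra).
  destruct (MVT_cor2 (radial_energy a) (curv_flux a) 0 Rm HRm) as [xi [Hxi Hxi_in]].
  { intros r _. apply is_derive_Reals, is_derive_radial_energy, Hs. }
  pose proof (Hpos xi Hxi_in) as Ha.
  assert (Hflux : curv_flux a xi = c * a xi ^ 3).
  { rewrite <- (Hc xi Hxi_in). unfold angular_speed. field. lra. }
  unfold radial_energy in Hxi. rewrite Hd0, HdRm, a0, aRm, Hflux in Hxi.
  assert (0 < a xi ^ 3 * Rm) by (apply Rmult_lt_0_compat; [apply pow_lt|]; lra).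
  nra.
Qed.

Lemma curv_const_of_angular_speed_eq0 (Rm : R) (a : R -> R) :
  smooth a -> (forall r, 0 < r < Rm -> a r <> 0) ->
  (forall r, 0 < r < Rm -> angular_speed a r = 0) ->
  forall x y, 0 < x < Rm -> 0 < y < Rm -> curv a x = curv a y.
Proof.
  intros Hs Ha Hw x y Hx Hy.
  enough (curv a y - curv a x = 0 * (y - x)) by lra.
  apply is_derive_const_increment. intros t Ht.
  assert (Htin : 0 < t < Rm).
  { unfold Rmin, Rmax in Ht. destruct (Rle_dec x y); lra. }
  rewrite <- (Rmult_0_r (a t)), <- (Hw t Htin).
  apply is_derive_curv; [exact Hs | exact (Ha t Htin)].
Qed.

Theorem theorem5p1 (Rm : R) (a : R -> R) :
  metric_of_revolution Rm a ->
  (exists p q, in_cyl Rm p /\ in_cyl Rm q /\ gauss_curv a p <> gauss_curv a q) ->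
  ~ (exists (T : R) (X : R * R -> R * R) (Phi : R -> R * R -> R * R),
       0 < T /\ is_ham_field Rm a (gauss_curv a) X /\
       is_flow Rm X Phi /\ time_map_is_id Rm Phi T).
Proof.
  intros Hmetric [p [q [Hp [Hq Hpq]]]] [T [X [Phi [HT [HX [HPhi Hid]]]]]].
  pose proof Hmetric as [_ [Hs [_ [_ [Hpos _]]]]].
  assert (Ha : forall r, 0 < r < Rm -> a r <> 0)
    by (intros r Hr; pose proof (Hpos r Hr); lra).
  pose proof (ham_field_radial Rm a (curv a) (angular_speed a) X Ha
    (fun r Hr => is_derive_curv a r Hs (Ha r Hr)) HX) as Hrot.
  pose proof (rotation_time_map_id_lattice Rm T _ Phi
    (flow_of_rotation Rm _ X Phi Hrot HPhi) Hid) as Hperiod.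
  assert (Hconst : forall r, 0 < r < Rm -> angular_speed a r = angular_speed a (fst p)).
  { intros r Hr. apply (periodic_rotation_speed_const _ T 0 Rm HT); try assumption.
    intros x Hx. apply continuity_pt_angular_speed; [exact Hs | exact (Ha x Hx)]. }
  apply Hpq, (curv_const_of_angular_speed_eq0 Rm a Hs Ha); [|exact Hp | exact Hq].
  intros r Hr. rewrite (Hconst r Hr).
  exact (const_angular_speed_eq0 Rm a _ Hmetric Hconst).
Qed.
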